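(* Let $F$ be a field, $4\le n<\infty$, and let $\varphi$ be an almost identity PC-map of $\mathrm{UT}(n,F)$. Suppose $g,h,k:\mathrm{UT}(n,F)\to F$ are functions such that $\varphi(b)=b\,t_{2n}(g(b))\,t_{1\,n-1}(h(b))\,t_{1n}(k(b))$ for all $b\in\mathrm{UT}(n,F)$. Then there exist $\alpha,\beta\in F$ such that $g(b)=\alpha b_{23}$ and $h(b)=\beta b_{n-2\,n-1}$ for all $b\in\mathrm{UT}(n,F)$.
   Context: $\mathrm{UT}(n,F)$ is the group of upper unitriangular $n\times n$ matrices over $F$; $b_{ij}$ is the $(i,j)$ entry of $b$; $e$ is the identity, $e_{ij}$ the matrix unit, $t_{ij}(\alpha)=e+\alpha e_{ij}$ ($i<j$). $[x,y]=xyx^{-1}y^{-1}$. A PC-map is a bijection $\varphi$ of the group with $\varphi([x,y])=[\varphi(x),\varphi(y)]$ for all $x,y$; it is almost identity if $\varphi(t_{ij}(\alpha))=t_{ij}(\alpha)$ for all $i<j$, $\alpha\in F$. *)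

From HB Require Import structures.
From mathcomp Require Import all_boot all_order all_algebra.
Set Implicit Arguments. Unset Strict Implicit. Unset Printing Implicit Defensive.
Import GRing.Theory.
Local Open Scope ring_scope.

(* Paper indices are 1-based: index i (1 <= i <= n) is the ordinal p : 'I_n
   with p.+1 = i. *)

Definition entry (F : fieldType) (n : nat) (b : 'M[F]_n) (i j : nat) : F :=
  match [pick p : 'I_n | p.+1 == i], [pick q : 'I_n | q.+1 == j] with
  | Some p, Some q => b p q
  | _, _ => 0
  end.

Definition tmx (F : fieldType) (n : nat) (i j : nat) (a : F) : 'M[F]_n :=
  \matrix_(p < n, q < n) ((p == q)%:R + (if (p.+1 == i) && (q.+1 == j) then a else 0)).

Definition isUT (F : fieldType) (n : nat) (b : 'M[F]_n) : Prop :=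
  (forall p q : 'I_n, (q < p)%N -> b p q = 0) /\ (forall p : 'I_n, b p p = 1).

Definition commg_mx (F : fieldType) (n : nat) (x y : 'M[F]_n) : 'M[F]_n :=
  x *m y *m invmx x *m invmx y.

Definition PCmap (F : fieldType) (n : nat) (phi : 'M[F]_n -> 'M[F]_n) : Prop :=
  [/\ (forall b, isUT b -> isUT (phi b)),
      (forall b c, isUT b -> isUT c -> phi b = phi c -> b = c),
      (forall c, isUT c -> exists2 b, isUT b & phi b = c)
    & (forall x y, isUT x -> isUT y -> phi (commg_mx x y) = commg_mx (phi x) (phi y))].

Definition almost_identity (F : fieldType) (n : nat) (phi : 'M[F]_n -> 'M[F]_n) : Prop :=
  forall (i j : nat) (a : F), (1 <= i)%N -> (i < j)%N -> (j <= n)%N ->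
    phi (tmx n i j a) = tmx n i j a.

From HB Require Import structures.
From mathcomp Require Import all_boot all_order all_algebra.
From mathcomp Require Import zify ring.
Set Implicit Arguments. Unset Strict Implicit. Unset Printing Implicit Defensive.
Import GRing.Theory.
Local Open Scope ring_scope.

(* Write phi x = x (1 + N x) with N x = g x e_{2n} + h x e_{1,n-1} + k x e_{1n}.  These
   corrections multiply to zero and commute with a unitriangular b up to the (1,n) entry.
   Since [a b, b] = [a, b] and phi preserves commutators, phi(a)^-1 phi(a b) commutes with
   phi(b), and comparing (1,n) entries gives
     b_{12} (g(ab) - g(a) - g(b)) = b_{n-1,n} (h(ab) - h(a) - h(b)).
   So g(ab) = g(a) + g(b) whenever b_{n-1,n} = 0.  As phi fixes every t_{ij}(c), g vanishes
   on them, and every unitriangular matrix is t_{n-1,n}(c) times a product of t_{ij}(c') with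
   (i,j) <> (n-1,n); hence g = 0, and symmetrically h = 0.  Thus alpha = beta = 0, the only
   possible choice since g(t_{23}(c)) = 0 already. *)

Section Unitriangular.
Variables (F : fieldType) (n : nat).
Implicit Types (a b x y : 'M[F]_n) (i j p q r s : 'I_n) (c d : F).

Definition elmx i j c : 'M[F]_n := 1 + c *: delta_mx i j.

Lemma elmxE i j c r s : elmx i j c r s = (r == s)%:R + c * ((r == i) && (s == j))%:R.
Proof. by rewrite !mxE. Qed.

Lemma elmx0 i j : elmx i j 0 = 1.
Proof. by rewrite /elmx scale0r addr0. Qed.

Lemma elmxD i j c d : i != j -> elmx i j c * elmx i j d = elmx i j (c + d).
Proof.
move=> ij; rewrite /elmx -mulmxE mulmxDl mul1mx mulmxDr mulmx1 -scalemxAl -scalemxAr.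
rewrite mul_delta_mx_0 1?eq_sym // scaler0 scaler0 addr0 scalerDl.
by rewrite addrA addrAC.
Qed.

Lemma elmx_diag i j c : i != j -> elmx i j c i j = c.
Proof. by move=> ij; rewrite elmxE (negbTE ij) !eqxx mulr1 add0r. Qed.

Lemma elmx_offdiag i j c r s : r != s -> (r, s) != (i, j) -> elmx i j c r s = 0.
Proof. by rewrite elmxE xpair_eqE => /negbTE-> /negbTE->; rewrite mulr0 addr0. Qed.

Lemma mul_delta_mxE a i j r s : (a * delta_mx i j) r s = a r i * (s == j)%:R.
Proof.
rewrite -mulmxE mxE (bigD1 i) //= big1 => [|t /negbTE ti]; rewrite !mxE.
  by rewrite eqxx addr0.
by rewrite ti mulr0.
Qed.

Lemma delta_mx_mulE a i j r s : (delta_mx i j * a) r s = (r == i)%:R * a j s.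
Proof.
rewrite -mulmxE mxE (bigD1 j) //= big1 => [|t /negbTE tj]; rewrite !mxE.
  by rewrite eqxx andbT addr0.
by rewrite eq_sym tj andbF mul0r.
Qed.

Lemma tmx_elmx i j c : tmx n i.+1 j.+1 c = elmx i j c.
Proof. by apply/matrixP => r s; rewrite !mxE !eqSS; case: (_ && _); rewrite ?mulr1 ?mulr0. Qed.

Lemma isUT1 : isUT (1 : 'M[F]_n).
Proof.
by split=> [r s sr|r]; rewrite mxE ?eqxx // -val_eqE (gtn_eqF sr).
Qed.

Lemma isUT_elmx p q c : (p < q)%N -> isUT (elmx p q c).
Proof.
move=> pq; split=> [r s sr|r].
  apply: elmx_offdiag; first by rewrite -val_eqE (gtn_eqF sr).
  by apply: contraTneq sr => -[-> ->]; rewrite -leqNgt ltnW.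
rewrite elmxE eqxx; have [->|] := eqVneq r p; last by rewrite mulr0 addr0.
by rewrite -val_eqE (ltn_eqF pq) mulr0 addr0.
Qed.

Lemma isUT_mul a b : isUT a -> isUT b -> isUT (a * b).
Proof.
move=> [al ad] [bl bd]; split=> [p q qp|p]; rewrite -mulmxE mxE.
  apply: big1 => t _; have [tp|pt] := ltnP t p; first by rewrite al // mul0r.
  by rewrite bl ?mulr0 // (leq_trans qp pt).
rewrite (bigD1 p) //= ad bd mulr1 big1 ?addr0 // => t tp.
have [tp'|pt] := ltnP t p; first by rewrite al // mul0r.
by rewrite bl ?mulr0 // ltn_neqAle pt andbT eq_sym.
Qed.

Lemma isUT_mul_superdiag a b p q : isUT a -> isUT b -> q = p.+1 :> nat ->
  (a * b) p q = a p q + b p q.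
Proof.
move=> [al ad] [bl bd] qp; rewrite -mulmxE mxE (bigD1 p) // (bigD1 q) /=; last first.
  by apply/eqP => /(congr1 val) /=; lia.
rewrite ad bd mul1r mulr1 big1 ?addr0 1?addrC // => t /andP[tq tp].
have [tlp|pt] := ltnP t p; first by rewrite al // mul0r.
rewrite bl ?mulr0 //; move: tp tq pt; rewrite -!val_eqE /= qp; lia.
Qed.

Lemma isUT_unitmx y : isUT y -> y \in unitmx.
Proof.
move=> [yl yd]; rewrite unitmxE -det_tr det_trig.
  by rewrite big1 ?unitr1 // => i _; rewrite mxE yd.
by apply/is_trig_mxP => i j ij; rewrite mxE yl.
Qed.

Definition offdiag_support y := [set ij : 'I_n * 'I_n | (ij.1 < ij.2)%N && (y ij.1 ij.2 != 0)].

Lemma UT_support0 y : isUT y -> offdiag_support y = set0 -> y = 1.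
Proof.
move=> [yl yd] S0; apply/matrixP => r s; rewrite mxE.
have [rs|sr|/val_inj->] := ltngtP r s; last by rewrite yd eqxx.
- have : (r, s) \notin offdiag_support y by rewrite S0 inE.
  by rewrite inE /= rs negbK -val_eqE (ltn_eqF rs) => /eqP.
- by rewrite yl // -val_eqE (gtn_eqF sr).
Qed.

Lemma offdiag_support_clear y i j :
  offdiag_support (y - y i j *: delta_mx i j) = offdiag_support y :\ (i, j).
Proof.
apply/setP => -[r s]; rewrite !inE !mxE /= xpair_eqE.
have [[-> ->]|rs_ij] := eqVneq (r, s) (i, j); first by rewrite !eqxx mulr1 subrr eqxx andbF.
by move: rs_ij; rewrite xpair_eqE => /negbTE->; rewrite mulr0 subr0.
Qed.

Lemma UT_split_offdiag y : isUT y -> y != 1 -> exists i j,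
  [/\ (i < j)%N, (i, j) \in offdiag_support y, isUT (y - y i j *: delta_mx i j)
    & y = (y - y i j *: delta_mx i j) * elmx i j (y i j)].
Proof.
move=> Hy y1; have [yl yd] := Hy.
have [S0|[ij0 ij0S]] := set_0Vmem (offdiag_support y).
  by rewrite (UT_support0 Hy S0) eqxx in y1.
have [[i j] Sij min_ij] := arg_minnP (fun ij : 'I_n * 'I_n => val ij.1) ij0S.
have {}Sij : (i, j) \in offdiag_support y := Sij.
move: (Sij); rewrite inE /= => /andP[ij _].
(* Rows above [i] carry no off-diagonal entry, so column [i] of [y] is the unit vector. *)
have col_i r : y r i = (r == i)%:R.
  have [->|] := eqVneq r i; first by rewrite yd.
  rewrite -val_eqE /= neq_ltn => /orP[ri|ir]; last by rewrite yl.
  apply/eqP/negPn/negP => yri.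
  have : (r, i) \in offdiag_support y by rewrite inE /= ri yri.
  by move/min_ij; rewrite leqNgt ri.
have ji : j != i by rewrite -val_eqE (gtn_eqF ij).
exists i, j; split => //.
  split=> [r s sr|r]; rewrite !mxE.
    rewrite (yl _ _ sr) [(r == i) && _](_ : _ = false) ?mulr0 ?subr0 //.
    by apply: contraTF sr => /andP[/eqP-> /eqP->]; rewrite -leqNgt ltnW.
  rewrite yd [(r == i) && _](_ : _ = false) ?mulr0 ?subr0 //.
  by apply/negbTE; apply: contra ji => /andP[/eqP<- /eqP<-].
have y_delta : y * delta_mx i j = delta_mx i j.
  apply/matrixP => r s; rewrite -mulmxE mxE (bigD1 i) //= big1 ?addr0 => [|t ti].
    by rewrite col_i !mxE eqxx; case: (r == i); rewrite ?mul1r ?mul0r.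
  by rewrite !mxE (negbTE ti) mulr0.
rewrite /elmx mulrDr mulr1 -mulmxE -scalemxAr mulmxBl -scalemxAl mul_delta_mx_0 //.
by rewrite mulmxE y_delta scaler0 subr0 subrK.
Qed.

Lemma mul_UT_invariant (T : Type) (f : 'M[F]_n -> T) p0 q0 :
  (forall a i j c, isUT a -> (i < j)%N -> (i, j) != (p0, q0) -> f (a * elmx i j c) = f a) ->
  forall a y, isUT a -> isUT y -> y p0 q0 = 0 -> f (a * y) = f a.
Proof.
move=> f_inv a y; elim: {y}_.+1 {-2}y (ltnSn #|offdiag_support y|) a => // K IH y.
rewrite ltnS => suppK a Ha Hy y0.
have [->|y1] := eqVneq y 1; first by rewrite mulr1.
have [i [j [ij Sij Hy' ->]]] := UT_split_offdiag Hy y1.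
have ij_pq : (i, j) != (p0, q0).
  by apply: contraTneq Sij => -[-> ->]; rewrite inE y0 eqxx andbF.
rewrite mulrA f_inv //; last exact: isUT_mul.
apply: (IH _ _ a Ha Hy').
  by rewrite offdiag_support_clear; move: suppK; rewrite (cardsD1 (i, j)) Sij.
by rewrite !mxE y0 -xpair_eqE eq_sym (negbTE ij_pq) mulr0 subr0.
Qed.

End Unitriangular.

Section PartialMorphism.
Variables (F : fieldType) (n : nat) (G : 'M[F]_n -> F) (p q p' q' : 'I_n).
Implicit Types (a b x : 'M[F]_n) (i j : 'I_n).
Hypotheses (pq : q = p.+1 :> nat) (pq' : q' = p'.+1 :> nat) (neq_pq : (p, q) != (p', q')).
Hypothesis G_elmx : forall i j c, (i < j)%N -> G (elmx i j c) = 0.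
Hypothesis G_mulD : forall a b, isUT a -> isUT b -> b p' q' = 0 -> b p q != 0 ->
  G (a * b) = G a + G b.

Lemma partial_morph_mulD a b : isUT a -> isUT b -> b p' q' = 0 -> G (a * b) = G a + G b.
Proof.
move=> Ha Hb b0; have [bpq|] := eqVneq (b p q) 0; last exact: G_mulD.
have lt_pq : (p < q)%N by rewrite pq.
have neq_p_q : p != q by rewrite -val_eqE /= neq_ltn lt_pq.
(* If b p q = 0, go through w = t_pq(1), whose (p, q) entry makes [G_mulD] applicable. *)
pose w := elmx p q (1 : F); have Hw : isUT w := isUT_elmx 1 lt_pq.
have w_pq : w p q != 0 by rewrite elmx_diag ?oner_neq0.
have w0 : w p' q' = 0.
  by apply: elmx_offdiag; [rewrite -val_eqE /= neq_ltn pq' ltnSn | rewrite eq_sym].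
have bw_pq : (b * w) p q != 0 by rewrite isUT_mul_superdiag // bpq add0r.
have bw0 : (b * w) p' q' = 0 by rewrite isUT_mul_superdiag // b0 w0 addr0.
have Gw : G w = 0 := G_elmx _ lt_pq.
have e1 : G (a * b * w) = G (a * b) by rewrite G_mulD ?Gw ?addr0 //; apply: isUT_mul.
have e2 : G (a * (b * w)) = G a + G b.
  by rewrite G_mulD // ?(G_mulD Hb Hw) ?Gw ?addr0 //; apply: isUT_mul.
by rewrite -e1 -e2 mulrA.
Qed.

Lemma partial_morph_eq0 x : isUT x -> G x = 0.
Proof.
move=> Hx; have lt_pq' : (p' < q')%N by rewrite pq'.
have neq_p_q' : p' != q' by rewrite -val_eqE /= neq_ltn lt_pq'.
set v := x p' q'; set y := elmx p' q' (- v) * x.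
have Hy : isUT y := isUT_mul (isUT_elmx _ lt_pq') Hx.
have y0 : y p' q' = 0.
  by rewrite (isUT_mul_superdiag (isUT_elmx (- v) lt_pq') Hx pq') elmx_diag // addNr.
have -> : x = elmx p' q' v * y by rewrite mulrA elmxD // addrN elmx0 mul1r.
have inv a i j c : isUT a -> (i < j)%N -> (i, j) != (p', q') -> G (a * elmx i j c) = G a.
  move=> Ha ij ij_pq; rewrite partial_morph_mulD ?G_elmx ?addr0 //; first exact: isUT_elmx.
  by apply: elmx_offdiag; rewrite // eq_sym.
rewrite partial_morph_mulD ?G_elmx ?add0r //; last exact: isUT_elmx.
rewrite -[y]mul1r.
by rewrite (mul_UT_invariant inv (isUT1 F n) Hy y0) -(@elmx0 F _ p' q') G_elmx.
Qed.

End PartialMorphism.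

Section CentralCorrection.
Variables (F : fieldType) (m : nat).
Local Notation n := m.+4.
Implicit Types (x y : 'M[F]_n) (i j r s : 'I_n) (a b c : F).

(* The paper's indices 1, 2, n-1 and n. *)
Definition i0 : 'I_n := ord0.
Definition i1 : 'I_n := @Ordinal n 1 isT.
Definition iM : 'I_n := @Ordinal n m.+2 (leqW (ltnSn _)).
Definition iL : 'I_n := ord_max.

Lemma iM_neq_iL : (iM == iL) = false.
Proof. by rewrite -val_eqE /= ltn_eqF. Qed.

Definition idx_neq := ((erefl : (i0 == i1) = false), (erefl : (i1 == i0) = false),
  (erefl : (i0 == iM) = false), (erefl : (iM == i0) = false),
  (erefl : (i0 == iL) = false), (erefl : (iL == i0) = false),
  (erefl : (i1 == iM) = false), (erefl : (iM == i1) = false),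
  (erefl : (i1 == iL) = false), (erefl : (iL == i1) = false),
  iM_neq_iL, etrans (eq_sym iL iM) iM_neq_iL).

Definition Nmx (a b c : F) : 'M[F]_n :=
  a *: delta_mx i1 iL + b *: delta_mx i0 iM + c *: delta_mx i0 iL.

Lemma NmxE a b c r s : Nmx a b c r s =
  a * ((r == i1) && (s == iL))%:R + b * ((r == i0) && (s == iM))%:R
  + c * ((r == i0) && (s == iL))%:R.
Proof. by rewrite !mxE. Qed.

Lemma Nmx_coef a b c :
  [/\ Nmx a b c i1 iL = a, Nmx a b c i0 iM = b & Nmx a b c i0 iL = c].
Proof. by rewrite !NmxE !eqxx !idx_neq /=; split; ring. Qed.

Lemma Nmx_mul a b c a' b' c' : Nmx a b c * Nmx a' b' c' = 0.
Proof.
rewrite /Nmx -mulmxE !mulmxDl !mulmxDr -!scalemxAl -!scalemxAr !mul_delta_mx_cond.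
by rewrite !idx_neq !mulr0n !scaler0 !addr0.
Qed.

Lemma Nmx_sub a b c a' b' c' :
  Nmx a b c - Nmx a' b' c' = Nmx (a - a') (b - b') (c - c').
Proof. by apply/matrixP => r s; rewrite !mxE; ring. Qed.

Lemma Nmx_mulV a b c : (1 + Nmx a b c) * (1 - Nmx a b c) = 1.
Proof. by rewrite mulrDl mul1r mulrBr mulr1 Nmx_mul subr0 addrNK. Qed.

Lemma Nmx_unit a b c : 1 + Nmx a b c \is a GRing.unit.
Proof.
apply/unitrP; exists (1 - Nmx a b c); split; last exact: Nmx_mulV.
by rewrite mulrDr mulr1 mulrBl mul1r Nmx_mul subr0 subrK.
Qed.

Lemma Nmx_inv a b c : (1 + Nmx a b c)^-1 = 1 - Nmx a b c.
Proof. by apply: (mulrI (Nmx_unit a b c)); rewrite mulrV ?Nmx_unit ?Nmx_mulV. Qed.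

Lemma UT_col0 y r : isUT y -> y r i0 = (r == i0)%:R.
Proof.
move=> [yl yd]; have [->|ne] := eqVneq r i0; first by rewrite yd.
by apply: yl; rewrite lt0n.
Qed.

Lemma UT_col1 y r : isUT y -> y r i1 = (r == i1)%:R + y i0 i1 * (r == i0)%:R.
Proof.
move=> [yl yd]; have [->|ne1] := eqVneq r i1; first by rewrite yd idx_neq mulr0 addr0.
have [->|ne0] := eqVneq r i0; first by rewrite mulr1 add0r.
rewrite mulr0 addr0; apply: yl; move: ne0 ne1; rewrite -!val_eqE /=; lia.
Qed.

Lemma UT_rowL y s : isUT y -> y iL s = (s == iL)%:R.
Proof.
move=> [yl yd]; have [->|ne] := eqVneq s iL; first by rewrite yd.
by apply: yl; rewrite ltn_neqAle ne -ltnS ltn_ord.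
Qed.

Lemma UT_rowM y s : isUT y -> y iM s = (s == iM)%:R + y iM iL * (s == iL)%:R.
Proof.
move=> [yl yd]; have [->|neM] := eqVneq s iM; first by rewrite yd idx_neq mulr0 addr0.
have [->|neL] := eqVneq s iL; first by rewrite mulr1 add0r.
rewrite mulr0 addr0; apply: yl; move: neM neL (ltn_ord s); rewrite -!val_eqE /=; lia.
Qed.

Lemma UT_mul_delta0 y j : isUT y -> y * delta_mx i0 j = delta_mx i0 j.
Proof.
move=> Hy; apply/matrixP => r s; rewrite mul_delta_mxE UT_col0 // mxE.
by rewrite -mulnb natrM.
Qed.

Lemma UT_mul_delta1 y j : isUT y ->
  y * delta_mx i1 j = delta_mx i1 j + y i0 i1 *: delta_mx i0 j.
Proof.
move=> Hy; apply/matrixP => r s; rewrite mul_delta_mxE UT_col1 // !mxE.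
by rewrite -!mulnb !natrM; ring.
Qed.

Lemma delta_mx_mulUT_L y i : isUT y -> delta_mx i iL * y = delta_mx i iL.
Proof.
move=> Hy; apply/matrixP => r s; rewrite delta_mx_mulE UT_rowL // mxE.
by rewrite -mulnb natrM.
Qed.

Lemma delta_mx_mulUT_M y i : isUT y ->
  delta_mx i iM * y = delta_mx i iM + y iM iL *: delta_mx i iL.
Proof.
move=> Hy; apply/matrixP => r s; rewrite delta_mx_mulE UT_rowM // !mxE.
by rewrite -!mulnb !natrM; ring.
Qed.

Lemma UT_mulNmx y a b c : isUT y -> y * Nmx a b c = Nmx a b (c + a * y i0 i1).
Proof.
move=> Hy; rewrite /Nmx !mulrDr -!scalerAr UT_mul_delta1 // !UT_mul_delta0 //.
by apply/matrixP => r s; rewrite !mxE; ring.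
Qed.

Lemma Nmx_mulUT y a b c : isUT y -> Nmx a b c * y = Nmx a b (c + b * y iM iL).
Proof.
move=> Hy; rewrite /Nmx !mulrDl -!scalerAl delta_mx_mulUT_M // !delta_mx_mulUT_L //.
by apply/matrixP => r s; rewrite !mxE; ring.
Qed.

Lemma UT_Nmx_commute y a b c a' b' c' : isUT y ->
  (y + Nmx a b c) * (y + Nmx a' b' c') = (y + Nmx a' b' c') * (y + Nmx a b c) ->
  a * y i0 i1 - b * y iM iL = a' * y i0 i1 - b' * y iM iL.
Proof.
move=> Hy; rewrite !(mulrDl y) !(mulrDr y y) !(mulrDr (Nmx _ _ _) y) !Nmx_mul !addr0.
rewrite !UT_mulNmx // !Nmx_mulUT // => /matrixP/(_ i0 iL).
rewrite !mxE !eqxx !idx_neq /= !mulr0 !add0r !mulr1 -!addrA => /addrI e.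
apply/eqP; rewrite -subr_eq0; apply/eqP.
transitivity (c + (a * y i0 i1 + (c' + b' * y iM iL))
              - (c' + (a' * y i0 i1 + (c + b * y iM iL)))); first by ring.
by rewrite e subrr.
Qed.

Lemma elmx_prod_Nmx a b c : elmx i1 iL a * elmx i0 iM b * elmx i0 iL c = 1 + Nmx a b c.
Proof.
rewrite /elmx !(mulrDl, mulrDr, mul1r, mulr1) -!scalerAl -!scalerAr -!mulmxE.
rewrite !mul_delta_mx_cond !idx_neq !(mulr0n, mul0mx, scaler0, add0r, addr0).
by apply/matrixP => r s; rewrite !mxE; ring.
Qed.

Lemma isUT_unit x : isUT x -> x \is a GRing.unit.
Proof. exact: isUT_unitmx. Qed.

Section AlmostIdentityPCmap.
Variables (phi : 'M[F]_n -> 'M[F]_n) (g h k : 'M[F]_n -> F).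
Hypothesis phiE : forall x, isUT x -> phi x = x * (1 + Nmx (g x) (h x) (k x)).
Hypothesis phi_commg : forall x y, isUT x -> isUT y ->
  phi (x * y * x^-1 * y^-1) = phi x * phi y * (phi x)^-1 * (phi y)^-1.
Hypothesis phi_elmx : forall i j c, (i < j)%N -> phi (elmx i j c) = elmx i j c.

Lemma phi_unit x : isUT x -> phi x \is a GRing.unit.
Proof. by move=> Hx; rewrite phiE // unitrMl ?Nmx_unit // isUT_unit. Qed.

Lemma phi_addE x : isUT x -> phi x = x + Nmx (g x) (h x) (k x + g x * x i0 i1).
Proof. by move=> Hx; rewrite phiE // mulrDr mulr1 UT_mulNmx. Qed.

Lemma gh_elmx i j c : (i < j)%N -> g (elmx i j c) = 0 /\ h (elmx i j c) = 0.
Proof.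
move=> ij; set t := elmx i j c.
have N0 : Nmx (g t) (h t) (k t + g t * t i0 i1) = 0.
  by apply: (addrI t); rewrite -phi_addE ?phi_elmx ?addr0 //; exact: isUT_elmx.
have [gt ht _] := Nmx_coef (g t) (h t) (k t + g t * t i0 i1).
by move: gt ht; rewrite N0 !mxE => <- <-.
Qed.

Lemma gh_cocycle (a b : 'M[F]_n) : isUT a -> isUT b ->
  b i0 i1 * (g (a * b) - g a - g b) = b iM iL * (h (a * b) - h a - h b).
Proof.
move=> Ha Hb; have Hab := isUT_mul Ha Hb.
have pa := phi_unit Ha; have pb := phi_unit Hb; have pab := phi_unit Hab.
(* [a b, b] = [a, b] *)
have conj_eq : phi (a * b) * phi b / phi (a * b) = phi a * phi b / phi a.
  have pbV : (phi b)^-1 \is a GRing.unit by rewrite unitrV.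
  apply: (mulIr pbV); rewrite -!phi_commg //.
  by rewrite invrM ?isUT_unit // !mulrA (mulrK (isUT_unit Hb)).
set W := (phi a)^-1 * phi (a * b).
have W_comm : W * phi b = phi b * W.
  by rewrite /W -mulrA -[phi (a * b) * _](divrK pab) conj_eq !mulrA mulVr // mul1r.
have [c W_E] : exists c, W = b + Nmx (g (a * b) - g a) (h (a * b) - h a) c.
  eexists; rewrite /W !phiE // invrM ?Nmx_unit ?isUT_unit // Nmx_inv.
  rewrite -mulrA -(mulrA a) mulKr ?isUT_unit // (mulrDr b) mulr1 UT_mulNmx //.
  rewrite (mulrBl (b + _)) mul1r (mulrDr (Nmx _ _ _) b) Nmx_mul addr0 Nmx_mulUT //.
  rewrite -addrA Nmx_sub.
  reflexivity.
rewrite W_E (phi_addE Hb) in W_comm; move/(UT_Nmx_commute Hb): W_comm => e.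
apply/eqP; rewrite -subr_eq0; apply/eqP.
transitivity ((g (a * b) - g a) * b i0 i1 - (h (a * b) - h a) * b iM iL
              - (g b * b i0 i1 - h b * b iM iL)); first by ring.
by rewrite e subrr.
Qed.

Lemma g_eq0 x : isUT x -> g x = 0.
Proof.
apply: (@partial_morph_eq0 _ _ g i0 i1 iM iL) => // [i j c ij|y z Hy Hz z0 z01].
  by case: (gh_elmx c ij).
move: (gh_cocycle Hy Hz); rewrite z0 mul0r => /eqP; rewrite mulf_eq0 (negbTE z01) /=.
by rewrite subr_eq0 subr_eq addrC => /eqP.
Qed.

Lemma h_eq0 x : isUT x -> h x = 0.
Proof.
apply: (@partial_morph_eq0 _ _ h iM iL i0 i1) => // [i j c ij|y z Hy Hz z0 z01].
  by case: (gh_elmx c ij).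
move: (gh_cocycle Hy Hz); rewrite z0 mul0r => /esym/eqP; rewrite mulf_eq0 (negbTE z01) /=.
by rewrite subr_eq0 subr_eq addrC => /eqP.
Qed.

End AlmostIdentityPCmap.

End CentralCorrection.

Theorem mainTheorem11 (F : fieldType) (n : nat) (hn : (4 <= n)%N)
  (phi : 'M[F]_n -> 'M[F]_n) (g h k : 'M[F]_n -> F) :
  PCmap phi -> almost_identity phi ->
  (forall b, isUT b ->
     phi b = b *m tmx n 2 n (g b) *m tmx n 1 n.-1 (h b) *m tmx n 1 n (k b)) ->
  exists alpha beta : F, forall b, isUT b ->
     g b = alpha * entry b 2 3 /\ h b = beta * entry b n.-2 n.-1.
Proof.
have [m Em] : exists m, n = m.+4 by exists (n - 4)%N; lia.
subst n.
move=> [_ _ _ phi_commg] almost_id phi_form.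
have phiE x : isUT x -> phi x = x * (1 + Nmx m (g x) (h x) (k x)).
  move=> Hx; rewrite phi_form // -elmx_prod_Nmx !mulrA.
  by rewrite -(tmx_elmx (i1 m)) -(tmx_elmx (i0 m)) -(tmx_elmx (i0 m) (iL m)).
have phi_elmx (i j : 'I_m.+4) c : (i < j)%N -> phi (elmx i j c) = elmx i j c.
  by move=> ij; rewrite -tmx_elmx almost_id.
exists 0, 0 => b Hb; rewrite !mul0r.
split; [exact: (g_eq0 phiE phi_commg phi_elmx) | exact: (h_eq0 phiE phi_commg phi_elmx)].
Qed.
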